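(* Let $\mathcal F \subset \binom{[n]}{k}$ be initial and let $q$ be a positive integer with $q < n$. Let $P \subset R \subset [q]$ with $|R| \leq k$. For $S \subset [q]$ write $\mathcal F_S = \{F \setminus S : F \in \mathcal F,\ F \cap [q] = S\}$ (a family of $(k-|S|)$-subsets of $[q+1,n]$). Then $$\frac{|\mathcal F_P|}{\binom{n-q}{k-|P|}} \leq \frac{|\mathcal F_R|}{\binom{n-q}{k-|R|}}.$$
   Context: For $k$-sets $A=\{x_1<\dots<x_k\}$, $B=\{y_1<\dots<y_k\}$, $A\prec B$ means $x_i\le y_i$ for all $i$. A family $\mathcal F\subset\binom{[n]}{k}$ is initial if $A\prec B\in\mathcal F$ implies $A\in\mathcal F$. $[q+1,n]=\{q+1,\dots,n\}$. *)

From mathcomp Require Import all_boot all_order all_algebra.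
Set Implicit Arguments. Unset Strict Implicit. Unset Printing Implicit Defensive.

(* Convention: the ground set [n] = {1,...,n} is modelled by 'I_n, the element
   i : 'I_n standing for i+1.  This is order preserving, so [q] = {1..q}
   corresponds to {i : 'I_n | i < q}. *)

Definition sorted_elems n (A : {set 'I_n}) : seq nat :=
  sort leq (map val (enum A)).

Definition shift_le n (A B : {set 'I_n}) : bool :=
  (#|A| == #|B|) && all2 leq (sorted_elems A) (sorted_elems B).

Definition initial n k (F : {set {set 'I_n}}) : Prop :=
  forall A B : {set 'I_n}, #|A| = k -> #|B| = k ->
    shift_le A B -> B \in F -> A \in F.

Definition initseg n q : {set 'I_n} := [set i : 'I_n | val i < q].

Definition trace_fam n q (F : {set {set 'I_n}}) (S : {set 'I_n}) : {set {set 'I_n}} :=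
  [set G :\: S | G in [set G in F | G :&: initseg n q == S]].

From mathcomp Require Import all_boot all_order all_algebra.
Import Order.TTheory GRing.Theory Num.Theory.
Set Implicit Arguments. Unset Strict Implicit. Unset Printing Implicit Defensive.

(* Write  F_S  for the trace family of S, a family of (k - |S|)-subsets of
   [q+1,n], and  r(S) = |F_S| / C(n-q, k-|S|).  Since P ⊆ R can be joined by
   a chain of one-point extensions inside R, it suffices to show
   r(S) <= r(S ∪ {x}) for x ∈ [q] \ S with |S| < k.

   This one-step inequality is a double count of the pairs (G, H) with
   G ∈ F_S, H ∈ F_{S∪{x}} and H ⊆ G, with j = k - |S|:
   - every G ∈ F_S yields the j sets G \ {y} in F_{S∪{x}}: this is where
     initiality enters, since trading y > q for the smaller x ∈ [q] gives a
     set that precedes the original one in the shift order;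
   - every H ∈ F_{S∪{x}} lies in at most (n-q) - (j-1) sets G ⊆ [q+1,n]
     with |G| = |H| + 1.
   Hence |F_S| j <= |F_{S∪{x}}| (n-q-j+1), which is r(S) <= r(S ∪ {x}) by
   the identity j C(m,j) = (m-j+1) C(m,j-1). *)

Local Open Scope nat_scope.

Section SortedShift.

Lemma all2_leq_refl (s : seq nat) : all2 leq s s.
Proof. by elim: s => //= a s ->; rewrite leqnn. Qed.

Lemma sort_cons_min (a : nat) (t : seq nat) :
  all (leq a) t -> sort leq (a :: t) = a :: sort leq t.
Proof.
move=> a_min; apply: (sorted_eq leq_trans anti_leq).
- exact: sort_sorted leq_total _.
- rewrite /= path_min_sorted; first exact: (sort_sorted leq_total).
  by rewrite all_sort.
- by rewrite perm_sort perm_cons perm_sym perm_sort.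
Qed.

Lemma all2_leq_lower_head (h y : nat) (u : seq nat) :
  sorted leq u -> all (leq h) u -> y \in u -> all2 leq (h :: rem y u) u.
Proof.
elim: u h => [//|u0 u IH] h /= u_sorted /andP[hu0 h_min] yu.
rewrite hu0 /=; case: (u0 =P y) => [_|/eqP u0y]; first exact: all2_leq_refl.
rewrite in_cons eq_sym (negbTE u0y) /= in yu.
apply: IH => //; first exact: (path_sorted u_sorted).
exact: order_path_min leq_trans u_sorted.
Qed.

Lemma all2_leq_swap_smaller (x y : nat) (s : seq nat) :
  sorted leq s -> uniq s -> y \in s -> x < y -> x \notin s ->
  all2 leq (sort leq (x :: rem y s)) s.
Proof.
elim: s => [//|h s IH] s_sorted /= /andP[_ s_uniq] ys xy.
rewrite in_cons negb_or => /andP[xh xs].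
have h_min := order_path_min leq_trans s_sorted.
have tail_sorted := path_sorted s_sorted.
case: eqP => [hy|/eqP hy].
  rewrite sort_cons_min; last first.
    by apply/allP=> z /(allP h_min); apply: leq_trans; rewrite hy ltnW.
  by rewrite (sorted_sort leq_trans tail_sorted) /= hy (ltnW xy) all2_leq_refl.
rewrite in_cons eq_sym (negbTE hy) /= in ys.
have rem_sorted : sorted leq (rem y s).
  exact: (@subseq_sorted _ leq leq_trans _ _ (rem_subseq y s)) tail_sorted.
have h_min_rem : all (leq h) (rem y s).
  by apply/allP=> z /mem_rem /(allP h_min).
case: (ltngtP x h) => [xlh|hlx|xeh]; last by rewrite xeh eqxx in xh.
- rewrite sort_cons_min; last first.
    apply/allP=> z; rewrite in_cons => /orP[/eqP->|/(allP h_min_rem)];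
      [exact: ltnW | exact: leq_trans (ltnW xlh)].
  rewrite sort_cons_min // (sorted_sort leq_trans rem_sorted) /= (ltnW xlh).
  exact: all2_leq_lower_head.
- have -> : sort leq [:: x, h & rem y s] = sort leq [:: h, x & rem y s].
    apply/perm_sortP; [exact: leq_total|exact: leq_trans|exact: anti_leq|].
    by apply/permP => p /=; rewrite addnCA.
  rewrite sort_cons_min; last by rewrite /= (ltnW hlx).
  by rewrite /= leqnn IH.
Qed.

Lemma mem_val_enum n (X : {set 'I_n}) (v : nat) :
  (v \in map val (enum X)) = (if insub v is Some i then i \in X else false).
Proof.
case: insubP => [i _ <-|]; first by rewrite (mem_map val_inj) mem_enum.
rewrite -leqNgt => nv; apply/negbTE/mapP => [[i _ iv]].
by move: (ltn_ord i); rewrite -iv ltnNge nv.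
Qed.

Lemma shift_le_swap n (B : {set 'I_n}) (x y : 'I_n) :
  y \in B -> x \notin B -> val x < val y -> shift_le (x |: (B :\ y)) B.
Proof.
move=> yB xB xy; apply/andP; split.
  by rewrite cardsU1 (cardsD1 y B) yB in_setD1 (negbTE xB) andbF.
set s := sorted_elems B.
have s_uniq : uniq s by rewrite sort_uniq (map_inj_uniq val_inj) enum_uniq.
have s_sorted : sorted leq s by apply: sort_sorted; exact: leq_total.
have mem_s v : (v \in s) = (v \in map val (enum B)) by rewrite mem_sort.
have xs : val x \notin s by rewrite mem_s (mem_map val_inj) mem_enum.
have ys : val y \in s by rewrite mem_s (mem_map val_inj) mem_enum.
have -> : sorted_elems (x |: (B :\ y)) = sort leq (val x :: rem (val y) s).
  apply/perm_sortP; [exact: leq_total|exact: leq_trans|exact: anti_leq|].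
  apply: uniq_perm.
  - by rewrite (map_inj_uniq val_inj) enum_uniq.
  - by rewrite /= rem_uniq // andbT; apply: contra xs; exact: mem_rem.
  - move=> v; rewrite in_cons (mem_rem_uniq _ s_uniq) inE mem_s !mem_val_enum.
    case: insubP => [i _ <-|]; first by rewrite !inE.
    rewrite -leqNgt => nv; rewrite andbF orbF; apply/esym/eqP => xv.
    by move: (ltn_ord x); rewrite -xv ltnNge nv.
exact: all2_leq_swap_smaller.
Qed.

End SortedShift.

Section Counting.

Lemma double_count (T U : finType) (A : {set T}) (B : {set U})
    (r : T -> U -> bool) (c d : nat) :
  (forall a, a \in A -> c <= #|[set b in B | r a b]|) ->
  (forall b, b \in B -> #|[set a in A | r a b]| <= d) ->
  #|A| * c <= #|B| * d.
Proof.
move=> degA degB.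
have edges_from a : #|[set b in B | r a b]| = \sum_(b in B) r a b.
  rewrite -sum1dep_card big_mkcondr /=.
  by apply: eq_bigr => b _; case: (r a b).
have edges_to b : #|[set a in A | r a b]| = \sum_(a in A) r a b.
  rewrite -sum1dep_card big_mkcondr /=.
  by apply: eq_bigr => a _; case: (r a b).
rewrite -!sum_nat_const.
apply: (@leq_trans (\sum_(a in A) \sum_(b in B) r a b)).
  by apply: leq_sum => a aA; rewrite -edges_from degA.
rewrite exchange_big /=; apply: leq_sum => b bB.
by rewrite -edges_to degB.
Qed.

(* The sets G with H ⊆ G ⊆ U and |G| = |H| + 1 are of the form H ∪ {y}
   with y ∈ U \ H, so there are at most |U \ H| of them. *)
Lemma card_one_point_extensions (T : finType) (U H : {set T})
    (Z : {set {set T}}) :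
  (forall G, G \in Z -> [/\ H \subset G, G \subset U & #|G| = #|H|.+1]) ->
  #|Z| <= #|U :\: H|.
Proof.
move=> Z_ext; apply: leq_trans (leq_imset_card (fun y => y |: H) _).
apply: subset_leq_card; apply/subsetP => G /Z_ext [HG GU cardG].
have /cards1P [y Gy] : #|G :\: H| == 1.
  by rewrite (cardsDS HG) cardG subSnn.
have yGH : y \in G :\: H by rewrite Gy set11.
apply/imsetP; exists y.
  by move: yGH; rewrite !inE => /andP[-> /(subsetP GU)].
by rewrite -{1}(setID G H) (setIidPr HG) Gy setUC.
Qed.

Lemma card_one_point_deletions (T : finType) (G : {set T}) :
  #|[set G :\ y | y in G]| = #|G|.
Proof.
apply: card_in_imset => y z yG _ Gyz; apply/eqP; apply: contraT => yz.
have : y \in G :\ z by rewrite !inE yz yG.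
by rewrite -Gyz !inE eqxx.
Qed.

End Counting.

Lemma card_initseg n q : q <= n -> #|initseg n q| = q.
Proof.
move=> qn.
have -> : initseg n q = [set widen_ord qn i | i in 'I_q].
  apply/setP=> z; rewrite inE; apply/idP/imsetP => [zq|[i _ ->]] /=.
    by exists (Ordinal zq) => //; apply: val_inj.
  exact: ltn_ord.
by rewrite card_imset ?card_ord // => a b /(congr1 val) /= ab; apply: val_inj.
Qed.

Lemma card_initsegC n q : q <= n -> #|~: initseg n q| = n - q.
Proof.
move=> qn; apply/eqP; rewrite -(eqn_add2l q) subnKC //.
by rewrite -{1}(card_initseg qn) cardsC card_ord.
Qed.

Section TraceFamilies.

Variables (n k q : nat) (F : {set {set 'I_n}}).
Hypothesis F_uniform : forall G, G \in F -> #|G| = k.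
Hypothesis F_initial : initial k F.

Local Notation Q := (initseg n q).
Local Notation trace := (trace_fam q F).

Lemma traceP (S H : {set 'I_n}) :
  reflect (exists2 G, G \in F & G :&: Q = S /\ H = G :\: S) (H \in trace S).
Proof.
apply: (iffP imsetP) => [[G]|[G GF [GQ ->]]].
  by rewrite inE => /andP[GF /eqP GQ] ->; exists G.
by exists G => //; rewrite inE GF GQ eqxx.
Qed.

Lemma trace_shape (S H : {set 'I_n}) :
  H \in trace S -> H \subset ~: Q /\ #|H| = k - #|S|.
Proof.
case/traceP => G GF [GQ ->]; split.
  apply/subsetP=> z; rewrite !inE -GQ => /andP[zS zG].
  by apply: contra zS => zQ; rewrite !inE zG zQ.
by rewrite cardsD F_uniform // -GQ setIA setIid.
Qed.

(* Initiality: deleting any y from H ∈ F_S gives a member of F_{S∪{x}},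
   because the underlying set trades y > q for x <= q. *)
Lemma trace_delete (S H : {set 'I_n}) (x y : 'I_n) :
  x \in Q -> x \notin S -> H \in trace S -> y \in H ->
  H :\ y \in trace (x |: S).
Proof.
move=> xQ xS HS yH.
have yQ : y \notin Q by have := subsetP (trace_shape HS).1 y yH; rewrite inE.
have [xq yq] : val x < q /\ q <= val y by move: xQ yQ; rewrite !inE -leqNgt.
have xy : val x < val y := leq_trans xq yq.
case/traceP: HS yH => G GF [GQ ->] yGS.
have yG : y \in G by move: yGS; rewrite inE => /andP[].
have xG : x \notin G by apply: contra xS => xG; rewrite -GQ inE xG.
apply/traceP; exists (x |: (G :\ y)); last split.
- apply: (F_initial _ (F_uniform GF) (shift_le_swap yG xG xy) GF).
  by rewrite cardsU1 in_setD1 (negbTE xG) andbF -(F_uniform GF) (cardsD1 y G) yG.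
- apply/setP=> z; rewrite !inE -GQ !inE.
  case: (z =P x) => [->|_] //=.
  by case: (z =P y) => [->|_] //=; rewrite ltnNge yq andbF.
- apply/setP=> z; rewrite !inE.
  by case: (z =P x) => [->|_] /=; [rewrite (negbTE xG) !andbF | rewrite andbCA].
Qed.

Lemma trace_down_degree (S G : {set 'I_n}) (x : 'I_n) :
  x \in Q -> x \notin S -> G \in trace S ->
  k - #|S| <= #|[set H in trace (x |: S) | H \subset G]|.
Proof.
move=> xQ xS GS; rewrite -(trace_shape GS).2 -card_one_point_deletions.
apply: subset_leq_card; apply/subsetP => _ /imsetP [y yG ->].
by rewrite inE (trace_delete xQ xS GS yG) subD1set.
Qed.

Lemma trace_up_degree (S H : {set 'I_n}) (x : 'I_n) :
  q <= n -> x \notin S -> #|S| < k -> H \in trace (x |: S) ->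
  #|[set G in trace S | H \subset G]| <= (n - q) - (k - #|S|).-1.
Proof.
move=> qn xS Sk HxS; have [HQ cardH] := trace_shape HxS.
rewrite cardsU1 xS add1n subnS in cardH.
rewrite -cardH -(card_initsegC qn) -(cardsDS HQ).
apply: card_one_point_extensions => G; rewrite inE => /andP[GS HG].
have [GQ cardG] := trace_shape GS.
by split=> //; rewrite cardG cardH prednK // subn_gt0.
Qed.

Lemma trace_card_step (S : {set 'I_n}) (x : 'I_n) :
  q <= n -> x \in Q -> x \notin S -> #|S| < k ->
  #|trace S| * (k - #|S|) <= #|trace (x |: S)| * ((n - q) - (k - #|S|).-1).
Proof.
move=> qn xQ xS Sk.
apply: (double_count (r := fun G H : {set 'I_n} => H \subset G)) => [G GS | H HxS].
- exact: trace_down_degree.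
- exact: trace_up_degree qn xS Sk HxS.
Qed.

End TraceFamilies.

(* The counting inequality a j <= b (m-j+1) is the comparison of the
   normalized ratios a / C(m,j) and b / C(m,j-1), by j C(m,j) = (m-j+1) C(m,j-1). *)
Lemma binomial_ratio_step (K : numFieldType) (a b m j : nat) :
  0 < j -> a * j <= b * (m - j.-1) ->
  (a%:R / ('C(m, j))%:R <= b%:R / ('C(m, j.-1))%:R :> K)%R.
Proof.
case: j => // j _ /= count_ineq.
have [->|binS_gt0] := posnP 'C(m, j.+1).
  by rewrite invr0 mulr0 divr_ge0 // ler0n.
have bin_gt0 : 0 < 'C(m, j) by move: binS_gt0; rewrite !bin_gt0; exact: ltnW.
rewrite ler_pdivrMr ?ltr0n // mulrAC ler_pdivlMr ?ltr0n // -!natrM ler_nat.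
rewrite -(leq_pmul2l (ltn0Sn j)) mulnA mulnCA mul_bin_left mulnCA.
by rewrite (mulnC j.+1 a) mulnA (mulnC (m - j) b) leq_mul2r count_ineq orbT.
Qed.

Lemma subset_chain_le (d : Order.disp_t) (O : porderType d) (T : finType)
    (R : {set T}) (f : {set T} -> O) :
  (forall (S : {set T}) (x : T), S \subset R -> x \in R :\: S ->
     (f S <= f (x |: S))%O) ->
  forall P : {set T}, P \subset R -> (f P <= f R)%O.
Proof.
move=> f_step P PR; move cardRP: #|R :\: P| => m.
elim: m P PR cardRP => [|m IH] P PR cardRP.
  suff -> : P = R by [].
  by apply/eqP; rewrite eqEsubset PR -setD_eq0 -cards_eq0 cardRP.
have [x xRP] : exists x, x \in R :\: P by apply/set0Pn; rewrite -card_gt0 cardRP.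
apply: le_trans (f_step _ _ PR xRP) (IH _ _ _).
- by move: xRP; rewrite inE subUset sub1set PR andbT => /andP[].
- have -> : R :\: (x |: P) = (R :\: P) :\ x.
    by apply/setP => z; rewrite !inE negb_or andbA.
  by move: cardRP; rewrite (cardsD1 x) xRP add1n => -[].
Qed.

Local Open Scope ring_scope.

Theorem lemma2p5 (n k q : nat) (F : {set {set 'I_n}})
  (P R : {set 'I_n}) :
  (forall G, G \in F -> #|G| = k) ->
  initial k F ->
  (0 < q)%N -> (q < n)%N ->
  P \subset R -> R \subset initseg n q -> (#|R| <= k)%N ->
  (#|trace_fam q F P|%:R / ('C(n - q, k - #|P|))%:R : rat)
    <= #|trace_fam q F R|%:R / ('C(n - q, k - #|R|))%:R.
Proof.
move=> F_uniform F_initial _ /ltnW qn PR RQ Rk.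
pose ratio S := (#|trace_fam q F S|%:R / ('C(n - q, k - #|S|))%:R : rat).
apply: (@subset_chain_le _ _ _ R ratio) PR => S x SR xRS.
move: xRS; rewrite inE => /andP[xS xR].
have xSR : x |: S \subset R by rewrite subUset sub1set xR SR.
have Sk : (#|S| < k)%N.
  by have := leq_trans (subset_leq_card xSR) Rk; rewrite cardsU1 xS.
rewrite /ratio cardsU1 xS add1n subnS.
apply: binomial_ratio_step; first by rewrite subn_gt0.
exact: trace_card_step (subsetP RQ x xR) xS Sk.
Qed.
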